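(* The function $h$ satisfies $h(1)=0$, $h(2)=1$, and $h(n)=h\left(2^{\lceil\log_2 n\rceil}-n\right)+1$ for every integer $n>2$.
   Context: For $k\ge0$ and $0\le m<2^k$ let $\beta_k(m)\in\{0,1\}^k$ be the point whose $j$-th coordinate is the binary digit of $m$ of weight $2^{k-j}$. For $n\ge2$ with $k=\lceil\log_2 n\rceil$, a pair $(n_0,n_1)$ of integers with $n=n_0+n_1$, $n_0\ge n_1\ge1$ is a hypercubic bipartition (HCBP) of $n$ if for some $i\in\{1,\dots,k\}$ the hyperplane $x_i=1/2$ splits the points $\beta_k(0),\dots,\beta_k(n-1)$ into $n_0$ points on one side and $n_1$ on the other. For $n\ge 2$, $h(n)$ denotes the number of HCBPs of $n$; by convention $h(1)=0$ and $h(0)=0$. *)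

From mathcomp Require Import all_boot.

Definition clog2 (n : nat) : nat := up_log 2 n.

(* j-th coordinate (1 <= j <= k) of beta_k(m): binary digit of m of weight 2^(k-j). *)
Definition beta_coord (k m j : nat) : bool := odd (m %/ 2 ^ (k - j)).

(* number of points among beta_k(0..n-1) on the side x_j > 1/2 (coordinate 1). *)
Definition side1 (n k j : nat) : nat :=
  count (fun m => beta_coord k m j) (iota 0 n).

Definition is_hcbp (n n0 n1 : nat) : bool :=
  let k := clog2 n in
  [&& n == n0 + n1, n1 <= n0, 0 < n1 &
      has (fun j => let c := side1 n k j in
             ((c == n0) && (n - c == n1)) || ((c == n1) && (n - c == n0)))
          (iota 1 k)].

(* h(n) = number of HCBPs of n for n >= 2; h(0) = h(1) = 0.
   Candidate pairs have components <= n, so we enumerate [0..n]^2. *)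
Definition h (n : nat) : nat :=
  if n < 2 then 0
  else count (fun p : nat * nat => is_hcbp n p.1 p.2)
             [seq (a, b) | a <- iota 0 n.+1, b <- iota 0 n.+1].

From mathcomp Require Import all_boot zify.

(* Bit b of m is the coordinate x_(k-b) of beta_k(m), so the hyperplane of bit b
   cuts [0, n) into the [ones n b] integers below n with bit b set and the rest.
   Complementing m in [0, 2^k) complements all its bits.  Hence, if
   2^(k-1) < n = 2^k - m, bit b < k cuts [0, n) into sides of sizes
   2^(k-1) - (m - c) and 2^(k-1) - c, where c and m - c are the sides cut by
   bit b in [0, m).  The bits of m below ceil(log2 m) thus give exactly the
   HCBPs of m, shifted; the remaining bits (bit k-1 among them) cut [0, m)
   trivially and all give the one new HCBP (2^(k-1), n - 2^(k-1)). *)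

Definition ones (n b : nat) : nat := count (fun m => odd (m %/ 2 ^ b)) (iota 0 n).

Lemma onesS n b : ones n.+1 b = ones n b + odd (n %/ 2 ^ b).
Proof. by rewrite /ones -[n.+1]addn1 iotaD count_cat /= addn0. Qed.

Lemma ones_le n b : ones n b <= n.
Proof. by rewrite /ones (leq_trans (count_size _ _)) ?size_iota. Qed.

Lemma ones_small n b : n <= 2 ^ b -> ones n b = 0.
Proof.
move=> le_n; rewrite /ones (eq_in_count (a2 := pred0)) ?count_pred0 // => m.
by rewrite mem_iota => /andP[_ lt_m] /=; rewrite divn_small //; lia.
Qed.

Lemma odd_div_complement k b m : b < k -> m < 2 ^ k ->
  odd ((2 ^ k - 1 - m) %/ 2 ^ b) = ~~ odd (m %/ 2 ^ b).
Proof.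
move=> lt_bk lt_m.
have p_gt0 : 0 < 2 ^ b by rewrite expn_gt0.
have def_2k : 2 ^ k = 2 ^ (k - b) * 2 ^ b by rewrite -expnD subnK // ltnW.
have odd_E : odd (2 ^ (k - b)) = false by rewrite oddX subn_eq0 leqNgt lt_bk.
set p := 2 ^ b in p_gt0 def_2k *; set E := 2 ^ (k - b) in def_2k odd_E.
have lt_q : m %/ p < E by rewrite ltn_divLR // -def_2k.
have lt_r : m %% p < p by rewrite ltn_mod.
have def_m := divn_eq m p.
set q := m %/ p in lt_q def_m *; set r := m %% p in lt_r def_m *.
(* complementing [m] complements both its quotient and its remainder by [p] *)
have -> : 2 ^ k - 1 - m = (E - 1 - q) * p + (p - 1 - r).
  by rewrite def_2k def_m !mulnBl; nia.
rewrite divnMDl // divn_small ?addn0; last by lia.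
by rewrite -subnDA oddB ?odd_E ?add1n //; lia.
Qed.

Lemma ones_complement k b n : b < k -> n <= 2 ^ k ->
  ones (2 ^ k - n) b + n = ones (2 ^ k) b + ones n b.
Proof.
move=> lt_bk; elim: n => [|n IHn] lt_n; first by rewrite subn0 addn0.
have := IHn (ltnW lt_n).
have -> : 2 ^ k - n = (2 ^ k - 1 - n).+1 by lia.
rewrite !onesS odd_div_complement //.
have -> : 2 ^ k - n.+1 = 2 ^ k - 1 - n by lia.
by case: (odd _) => /=; lia.
Qed.

Lemma ones_exp2S k b : b <= k -> ones (2 ^ k.+1) b = 2 ^ k.
Proof.
move=> le_bk; have := @ones_complement k.+1 b (2 ^ k.+1) le_bk (leqnn _).
by rewrite subnn (@ones_small 0) // expnS; lia.
Qed.

Lemma ones_reflect {k b n} : b <= k -> n <= 2 ^ k ->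
  ones (2 ^ k.+1 - n) b + n = 2 ^ k + ones n b.
Proof.
move=> le_bk le_n; rewrite ones_complement ?ones_exp2S //.
by rewrite expnS; lia.
Qed.

Definition is_part (n a b : nat) : bool := (ones n b == a) || (ones n b + a == n).

Definition large_part (n a : nat) : bool :=
  [&& n - a <= a, 0 < n - a & has (is_part n a) (iota 0 (clog2 n))].

Lemma has_iota_rev k (P : pred nat) :
  has (fun j => P (k - j)) (iota 1 k) = has P (iota 0 k).
Proof.
apply/hasP/hasP => [[j] | [b]]; rewrite mem_iota => mem_j Pj.
  by exists (k - j); rewrite ?mem_iota //; lia.
by exists (k - b); rewrite ?mem_iota ?subKn //; lia.
Qed.

Lemma is_hcbpE n a c : a <= n -> is_hcbp n a c = (c == n - a) && large_part n a.
Proof.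
move=> le_an; rewrite /is_hcbp /large_part.
rewrite (has_iota_rev _ (fun b => let o := ones n b in
  ((o == a) && (n - o == c)) || ((o == c) && (n - o == a)))).
have [-> | ne_c] := eqVneq c (n - a); last by case: eqP; lia.
have -> : n == a + (n - a) by apply/eqP; lia.
rewrite (@eq_has _ _ (is_part n a)) // => b /=.
have := ones_le n b; rewrite /is_part; set o := ones n b => le_o.
by do ![case: eqP => ? /=]; lia.
Qed.

Lemma count_allpairs_rows (T1 T2 : eqType) (P : pred (T1 * T2)) (R : pred T1) s t :
  (forall a, a \in s -> count (fun b => P (a, b)) t = R a) ->
  count P [seq (a, b) | a <- s, b <- t] = count R s.
Proof.
elim: s => [|a s IHs] //= rowP.
rewrite count_cat count_map rowP ?mem_head // IHs // => a' mem_a'.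
by apply: rowP; rewrite inE mem_a' orbT.
Qed.

Lemma h_large_part n : h n = count (large_part n) (iota 0 n.+1).
Proof.
rewrite /h; case: ltnP => [|_].
  by case: n => [|[|]].
apply: count_allpairs_rows => a; rewrite mem_iota => /andP[_ lt_a].
rewrite (eq_count (a2 := fun c => (c == n - a) && large_part n a)); last first.
  by move=> c /=; rewrite is_hcbpE.
case: (large_part n a).
  rewrite (eq_count (a2 := pred1 (n - a))) => [|c]; last by rewrite andbT.
  by rewrite count_uniq_mem ?iota_uniq // mem_iota; lia.
by rewrite (eq_count (a2 := pred0)) ?count_pred0 // => c; rewrite andbF.
Qed.

Lemma count_iota_window (P : pred nat) lo w N :
    (forall a, P a -> lo <= a <= lo + w) -> lo + w < N ->
  count P (iota 0 N) = count (P \o addn lo) (iota 0 w.+1).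
Proof.
move=> suppP lt_N.
have count0 i l : (forall a, i <= a < i + l -> ~~ P a) -> count P (iota i l) = 0.
  move=> outP; apply/eqP; rewrite -leqn0 leqNgt -has_count; apply/hasPn => a.
  by rewrite mem_iota; apply: outP.
have -> : N = lo + (w.+1 + (N - lo - w.+1)) by lia.
rewrite !iotaD !count_cat add0n (count0 0 lo) 1?(count0 (lo + w.+1)) ?addn0; last 2 first.
- by move=> a /andP[? ?]; apply/negP => /suppP; lia.
- by move=> a /andP[? ?]; apply/negP => /suppP; lia.
by rewrite -[lo in iota lo]addn0 iotaDl count_map.
Qed.

Lemma is_part_high n a b : clog2 n <= b -> is_part n a b = (a == 0) || (a == n).
Proof.
move=> le_nb; rewrite /is_part ones_small ?add0n 1?eq_sym //.
by rewrite (leq_trans (up_logP n (isT : 1 < 2))) ?leq_exp2l.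
Qed.

Section Reflection.

Variables k m : nat.
Hypothesis lt_m : m < 2 ^ k.

Let n := 2 ^ k.+1 - m.

Lemma clog2_reflect : clog2 n = k.+1.
Proof. by apply: up_log_eq => //; rewrite /n expnS; lia. Qed.

Lemma is_part_reflect_range a b : b <= k -> is_part n a b -> 2 ^ k - m <= a <= 2 ^ k.
Proof.
move=> le_bk; have := ones_reflect le_bk (ltnW lt_m); have := ones_le m b.
by rewrite /is_part /n expnS => ? ? /orP[] /eqP; lia.
Qed.

Lemma is_part_reflect v b : b <= k -> v <= m ->
  is_part n (2 ^ k - m + v) b = is_part m v b.
Proof.
move=> le_bk le_vm; have := ones_reflect le_bk (ltnW lt_m); have := ones_le m b.
rewrite /is_part /n expnS => ? ?.
by do ![case: eqP => ? /=]; lia.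
Qed.

Lemma large_part_reflect v : v <= m ->
  large_part n (2 ^ k - m + v) = (v == m) || large_part m v.
Proof.
move=> le_vm; have le_clog2m : clog2 m <= k by apply: up_log_min => //; exact: ltnW.
rewrite /large_part clog2_reflect.
have -> : n - (2 ^ k - m + v) = 2 ^ k - v by rewrite /n expnS; lia.
rewrite (eq_in_has (a2 := is_part m v)) => [|b]; last first.
  by rewrite mem_iota => /andP[_ lt_bk]; apply: is_part_reflect.
have high : has (is_part m v) (iota (clog2 m) (k - clog2 m).+1) = (v == 0) || (v == m).
  apply/hasP/idP => [[b] | vP]; first by rewrite mem_iota => /andP[le_b _]; rewrite is_part_high.
  by exists (clog2 m); rewrite ?is_part_high // mem_iota; lia.
have -> : k.+1 = clog2 m + (k - clog2 m).+1 by lia.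
rewrite iotaD has_cat add0n high.
case: (v =P m) => [->|ne_vm]; first by rewrite !orbT andbT; apply/andP; split; lia.
have -> : 0 < 2 ^ k - v by lia.
have -> : 0 < m - v by lia.
have -> : (2 ^ k - v <= 2 ^ k - m + v) = (m - v <= v) by apply/idP/idP; lia.
by case: leqP => //= le_v; case: eqP => //= v0; lia.
Qed.

Lemma h_reflect : h n = h m + 1.
Proof.
have window : count (large_part n) (iota 0 n.+1) =
              count (large_part n \o addn (2 ^ k - m)) (iota 0 m.+1).
  apply: count_iota_window => [a|]; last by rewrite /n expnS; lia.
  case/and3P=> _ _ /hasP[b]; rewrite clog2_reflect mem_iota => /andP[_ lt_bk].
  by move/(is_part_reflect_range _ _ lt_bk); lia.
rewrite !h_large_part window.
rewrite (eq_in_count (a2 := fun v => (v == m) || large_part m v)) => [|v]; last first.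
  by rewrite mem_iota => /andP[_ le_vm]; apply: large_part_reflect.
rewrite -addn1 !iotaD !count_cat /= eqxx /large_part subnn andbF /= !addn0.
congr (_ + _); apply: eq_in_count => v; rewrite mem_iota => /andP[_ lt_vm].
by rewrite (_ : v == m = false) //; apply/eqP; lia.
Qed.

End Reflection.

Theorem corollary16 :
  h 1 = 0 /\ h 2 = 1 /\
  (forall n : nat, 2 < n -> h n = h (2 ^ clog2 n - n) + 1).
Proof.
split; first by [].
split; first by vm_compute.
move=> n lt2n; have /andP[lo hi] := up_log_bounds (isT : 1 < 2) (ltnW lt2n).
have [k def_k] : exists k, clog2 n = k.+1.
  by exists (clog2 n).-1; rewrite prednK // up_log_gt0 (ltnW lt2n).
rewrite -/(clog2 n) def_k /= in lo hi *.
have {1}-> : n = 2 ^ k.+1 - (2 ^ k.+1 - n) by lia.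
by rewrite h_reflect // expnS; lia.
Qed.
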